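(* For every integer $n \ge 19$ and every $d \in \{3,4,5\}$, \[ \mathcal{F}_{P_{n-d}} \le \frac{101}{100}\cdot \frac{\mathcal{F}_{P_n}}{\psi^d}. \]
   Context: $\mathcal{F}_{P_m}$ is the number of minimal forts of the path on $m$ vertices; equivalently $\mathcal{F}_{P_m}=a_m$ where $a_1=a_2=a_3=1$ and $a_m = a_{m-2}+a_{m-3}$ for $m \ge 4$. (A fort is a nonempty vertex set such that every vertex outside it has zero or at least two neighbors in it; minimal means no proper subset is a fort.) $\psi \approx 1.32472$ is the real root of $z^3 - z - 1 = 0$. *)

From HB Require Import structures.
From mathcomp Require Import all_boot all_order all_algebra.
From mathcomp Require Import reals.
Set Implicit Arguments. Unset Strict Implicit. Unset Printing Implicit Defensive.

(* Number of minimal forts of the path P_m, via the recurrence given in the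
   context: a_1 = a_2 = a_3 = 1, a_m = a_(m-2) + a_(m-3) for m >= 4.
   (The value at m = 0 is an irrelevant convention, never used.) *)
Fixpoint minFortsPath (m : nat) : nat :=
  match m with
  | 0 => 0
  | S m1 =>
    match m1 with
    | 0 => 1
    | S m2 =>
      match m2 with
      | 0 => 1
      | S m3 =>
        match m3 with
        | 0 => 1
        | S _ => minFortsPath m2 + minFortsPath m3
        end
      end
    end
  end.

From HB Require Import structures.
From mathcomp Require Import all_boot all_order all_algebra.
From mathcomp Require Import reals.
From mathcomp Require Import zify ring lra.
Import Order.TTheory GRing.Theory Num.Theory.

Set Implicit Arguments.
Unset Strict Implicit.
Unset Printing Implicit Defensive.

(* The shift (a_k, a_(k+1), a_(k+2)) |-> (a_(k+1), a_(k+2), a_(k+3)) is linear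
   with eigenvalues psi and a complex pair of modulus psi^(-1/2) < psi, so
   a_(k+1)/a_k -> psi, and a thin enough polyhedral cone around the Perron
   direction (1, psi, psi^2) is mapped into itself. Such a cone, with small
   integer facets, already contains the triple starting at k = 14 and forces
   a_(k+3), a_(k+4), a_(k+5) to be within 1% of psi^3 a_k, psi^4 a_k,
   psi^5 a_k; the remaining numerical input is psi < 53/40. *)

Local Notation a := minFortsPath.

Lemma minFortsPathE k : a k.+4 = a k.+2 + a k.+1.
Proof. by []. Qed.

Definition psi_cone (x y z : nat) : bool :=
  (36 * y + 34 * z <= 108 * x <= 37 * y + 34 * z) &&
  (67 * x + 88 * y <= 105 * z <= 67 * x + 89 * y).

Lemma psi_cone_shift x y z : psi_cone x y z -> psi_cone y z (x + y).
Proof. rewrite /psi_cone; lia. Qed.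

Lemma psi_cone_ratio x y z :
  psi_cone x y z -> (131 * x <= 100 * y) && (306 * x <= 100 * (y + z)).
Proof. rewrite /psi_cone; lia. Qed.

Lemma minFortsPath_psi_cone m : 14 <= m -> psi_cone (a m) (a m.+1) (a m.+2).
Proof.
elim: m => // m IHm; rewrite leq_eqVlt => /predU1P[<- // | /IHm].
by case: m {IHm} => // m /psi_cone_shift; rewrite addnC -minFortsPathE.
Qed.

Lemma minFortsPath_ratio m : 14 <= m ->
  [/\ 231 * a m <= 100 * a (m + 3), 306 * a m <= 100 * a (m + 4)
    & 406 * a m <= 100 * a (m + 5)].
Proof.
move=> hm; have /psi_cone_ratio := minFortsPath_psi_cone hm.
case: m hm => // k _; rewrite !addnS addn0.
rewrite (minFortsPathE k.+2) (minFortsPathE k.+1) (minFortsPathE k).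
by move=> /andP[r1 r2]; split; lia.
Qed.

Local Open Scope ring_scope.

Lemma natr_le_div_of_ratio (R : realFieldType) (c : R) (t x y : nat) :
  0 < c -> c * 10000 <= 101 * t%:R -> (t * x <= 100 * y)%N ->
  x%:R <= 101%:R / 100%:R * (y%:R / c).
Proof.
move=> c_gt0 hc; rewrite -(ler_nat R) !natrM => htxy.
have x_ge0 : 0 <= x%:R :> R by [].
rewrite mulrA ler_pdivlMr //; nra.
Qed.

Section Psi.

Variables (R : realFieldType) (psi : R).
Hypothesis psi_root : psi ^+ 3 - psi - 1 = 0.

Lemma psi_cube : psi * psi * psi = psi + 1.
Proof. by move: psi_root; rewrite !exprS expr0 mulr1 mulrA; lra. Qed.

Lemma psi_gt0 : 0 < psi.
Proof.
rewrite ltNge; apply/negP => psi_le0; have cube := psi_cube.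
have psi_le_m1 : psi <= -1.
  have : 0 <= psi * psi by rewrite -expr2 sqr_ge0.
  nra.
have : 1 <= psi * psi by nra.
nra.
Qed.

(* (53/40)^3 - 53/40 - 1 > 0, and t^3 - t is increasing past 1/sqrt 3. *)
Lemma psi_lt_53_40 : psi * 40 < 53.
Proof. have := psi_cube; nra. Qed.

Lemma psi_pow_bounds :
  [/\ psi ^+ 3 * 10000 <= 101 * 231%:R, psi ^+ 4 * 10000 <= 101 * 306%:R
    & psi ^+ 5 * 10000 <= 101 * 406%:R].
Proof.
have e3 : psi ^+ 3 = psi + 1 by rewrite -psi_cube !exprS expr0 mulr1 mulrA.
have e4 : psi ^+ 4 = psi * psi + psi by rewrite exprS e3; ring.
have e5 : psi ^+ 5 = psi * psi + psi + 1.
  by rewrite exprS e4 mulrDr mulrA psi_cube; ring.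
have := psi_gt0; have := psi_lt_53_40; rewrite e5 e4 e3; split; nra.
Qed.

End Psi.

Theorem mainTheorem15 (R : realType) (psi : R) (hpsi : psi ^+ 3 - psi - 1 = 0)
  (n d : nat) (hn : (19 <= n)%N) (hd : d \in [:: 3%N; 4%N; 5%N]) :
  (minFortsPath (n - d))%:R <= (101%:R / 100%:R) * ((minFortsPath n)%:R / psi ^+ d).
Proof.
have [hm hdn] : (14 <= n - d)%N /\ (d <= n)%N.
  by move: hd; rewrite !inE => /or3P[] /eqP ->; lia.
have [r3 r4 r5] := minFortsPath_ratio hm.
have [p3 p4 p5] := psi_pow_bounds hpsi.
have psid_gt0 : 0 < psi ^+ d by rewrite exprn_gt0 // psi_gt0.
rewrite -{2}(subnK hdn).
move: hd; rewrite !inE => /or3P[] /eqP hd; subst d.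
- exact: natr_le_div_of_ratio psid_gt0 p3 r3.
- exact: natr_le_div_of_ratio psid_gt0 p4 r4.
- exact: natr_le_div_of_ratio psid_gt0 p5 r5.
Qed.
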